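(* Let $k$ be a field, $R=k[x_1,\ldots,x_n]$ with $n\ge2$, and let $I$ be an almost reverse lexicographic ideal whose last generator is $x_{n-1}^t$ for some $t>0$ (so $f_{n-1}(0)=t$). Let \[T=\{(\alpha_1,\ldots,\alpha_{n-2},\beta)\in\mathbb{Z}^{n-1}_{\ge0}: \alpha=(\alpha_1,\ldots,\alpha_{n-2})\in\mathcal{I}_{n-2},\ 0\le\beta<f_{n-1}(\alpha)\}.\] Let $s$ be a positive integer with $s\le|T|$, and let $A_1>A_2>\cdots>A_s$ be the $s$ largest elements of $T$ (so $A_s>B$ for every $B\in T\setminus\{A_1,\ldots,A_s\}$). Let $g:\{A_1,\ldots,A_s\}\to\mathbb{Z}_{>0}$ satisfy $t\le|A_i|+g(A_i)\le|A_j|+g(A_j)$ whenever $A_i>A_j$. Let $J$ be the ideal generated by $\mathcal{S}=\mathcal{G}(I)\cup\{x^{A_i}x_n^{g(A_i)}:1\le i\le s\}$. Then $J$ is almost reverse lexicographic and $\mathcal{G}(J)=\mathcal{S}$.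
   Context: Degree reverse lexicographic order: for $M=x^\alpha,N=x^\beta$, $M>N$ iff $\deg M>\deg N$, or degrees are equal and for the largest $s$ with $\alpha_s\neq\beta_s$ one has $\alpha_s<\beta_s$. For $\alpha\in\mathbb{Z}^s_{\ge0}$, $x^\alpha=x_1^{\alpha_1}\cdots x_s^{\alpha_s}$, $|\alpha|=\sum\alpha_j$, and $\alpha\le\beta$ iff $x^\alpha\le x^\beta$. Almost reverse lexicographic: for every monomial $M$ and every minimal monomial generator $N$ of $I$ with $\deg M=\deg N$ and $M>N$, $M\in I$. $\mathcal{G}(I)$ is the minimal monomial generating set. The last generator of $I$ is the element of $\mathcal{G}(I)$ of maximal degree that is smallest in the order among elements of $\mathcal{G}(I)$ of that degree. $f_1=\min\{t:x_1^t\in I\}$; for $i\ge2$, $\alpha\in\mathbb{Z}^{i-1}_{\ge0}$, $f_i(\alpha)=\min\{t\ge0:x^\alpha x_i^t\in I\}$. $\mathcal{I}_{n-2}=\{(\alpha_1,\ldots,\alpha_{n-2})\in\mathbb{Z}^{n-2}_{\ge0}: 0\le\alpha_1<f_1,\ 0\le\alpha_j<f_j(\alpha_1,\ldots,\alpha_{j-1})\ (2\le j\le n-2)\}$; for $n=2$ it consists of the empty tuple and $f_1$ of the empty tuple is $f_1$. *)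

(* Monomial ideals of k[x_1,...,x_n] are modelled by their
   sets of exponent vectors (up-sets of N^n for componentwise order). *)
From mathcomp Require Import all_boot.
Set Implicit Arguments. Unset Strict Implicit. Unset Printing Implicit Defensive.

(* exponent vector of a monomial in n variables; index i : 'I_n is x_(i+1) *)
Notation mon n := {ffun 'I_n -> nat}.

Definition mdeg {n} (a : mon n) : nat := \sum_(i < n) a i.

Definition mdiv {n} (a b : mon n) : Prop := forall i, a i <= b i.

Definition mono_ideal {n} (I : mon n -> Prop) : Prop :=
  forall a b, I a -> mdiv a b -> I b.

Definition gen_ideal {n} (S : mon n -> Prop) : mon n -> Prop :=
  fun b => exists a, S a /\ mdiv a b.

Definition mingen {n} (I : mon n -> Prop) (a : mon n) : Prop :=
  I a /\ forall b, I b -> mdiv b a -> b = a.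

(* degree reverse lexicographic order: drl_lt b a  means  x^b < x^a *)
Definition drl_lt {n} (b a : mon n) : Prop :=
  mdeg b < mdeg a \/
  (mdeg b = mdeg a /\
   exists j : 'I_n, a j < b j /\ forall k : 'I_n, j < k -> a k = b k).

Definition drl_le {n} (b a : mon n) : Prop := b = a \/ drl_lt b a.

Definition almost_revlex {n} (I : mon n -> Prop) : Prop :=
  forall M N, mingen I N -> mdeg M = mdeg N -> drl_lt N M -> I M.

Definition last_gen {n} (I : mon n -> Prop) (L : mon n) : Prop :=
  mingen I L /\
  (forall N, mingen I N -> mdeg N <= mdeg L) /\
  (forall N, mingen I N -> mdeg N = mdeg L -> drl_le L N).

Definition xpow {n} (i : 'I_n) (t : nat) : mon n :=
  [ffun j => if j == i then t else 0].

(* k-th coordinate (0-based), 0 if out of range *)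
Definition mcoef {n} (a : mon n) (k : nat) : nat :=
  match (insub k : option 'I_n) with Some i => a i | None => 0 end.

(* x^(alpha_0..alpha_(j-1)) * x_(j+1)^u  (0-based j) *)
Definition pmon {n} (alpha : nat -> nat) (j : nat) (u : nat) : mon n :=
  [ffun k : 'I_n => if val k < j then alpha (val k)
                    else if val k == j then u else 0].

Definition is_min (P : nat -> Prop) (v : nat) : Prop :=
  P v /\ forall u, P u -> v <= u.

(* f_(j+1)(alpha_0..alpha_(j-1)) = v  (0-based j) *)
Definition f_val {n} (I : mon n -> Prop) (alpha : nat -> nat) (j : nat) (v : nat) : Prop :=
  is_min (fun u => I (pmon alpha j u)) v.

(* membership in T for n = m.+2 variables: B = (alpha_1..alpha_(n-2), beta)
   with alpha in I_(n-2) and beta < f_(n-1)(alpha); uniformly: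
   B_j < f_(j+1)(B_1..B_(j-1)) for all j = 1..n-1 *)
Definition inT {m} (I : mon m.+2 -> Prop) (B : mon m.+1) : Prop :=
  forall j : 'I_m.+1, exists v, f_val I (mcoef B) (val j) v /\ B j < v.

Definition ext_mon {m} (B : mon m.+1) (g : nat) : mon m.+2 :=
  [ffun k : 'I_m.+2 => if val k < m.+1 then mcoef B (val k) else g].

From mathcomp Require Import all_boot zify.
From Stdlib Require Import Classical.

(* Every minimal generator of I avoids x_n: such a generator has degree at most
   t; in degree t it would lie revlex-below the last generator x_(n-1)^t, and in
   smaller degree almost-revlexness would put a smaller power of x_(n-1) into I.
   Consequently T is exactly the set of exponents of the monomials of
   k[x_1..x_(n-1)] outside I, and G(I) together with the new monomials
   x^(A_i) x_n^(g_i) is an antichain for divisibility.  For almost-revlexness at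
   a new generator x^(A_i) x_n^(g_i) and a larger M = x^mu x_n^c of the same
   degree, mu lies revlex-above A_i; so either x^mu is in I, or mu is in T and,
   the A's being the top of T, mu = A_k with k < i, and the monotonicity of
   |A| + g gives g_k <= c. *)

Set Implicit Arguments. Unset Strict Implicit. Unset Printing Implicit Defensive.

Lemma is_min_exists (P : nat -> Prop) n : P n -> exists v, is_min P v.
Proof.
elim/ltn_ind: n => n IH Pn.
case: (classic (exists2 u, u < n & P u)) => [[u lt_un Pu]|no_smaller].
  exact: IH lt_un Pu.
exists n; split=> // u Pu; rewrite leqNgt; apply/negP => lt_un.
by apply: no_smaller; exists u.
Qed.

Section Monomials.
Variable n : nat.
Implicit Types (a b c : mon n) (I S : mon n -> Prop).

Lemma mcoef_ord a (k : 'I_n) : mcoef a k = a k.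
Proof.
rewrite /mcoef; case: insubP => [k' _ val_k'|]; last by rewrite ltn_ord.
by congr (a _); exact: val_inj val_k'.
Qed.

Lemma mdiv_refl a : mdiv a a.
Proof. by []. Qed.

Lemma mdiv_trans a b c : mdiv a b -> mdiv b c -> mdiv a c.
Proof. by move=> ab bc i; apply: leq_trans (ab i) (bc i). Qed.

Lemma mdiv_anti a b : mdiv a b -> mdiv b a -> a = b.
Proof. by move=> ab ba; apply/ffunP => i; apply/eqP; rewrite eqn_leq ab ba. Qed.

Lemma mdeg_mdiv a b : mdiv a b -> mdeg a <= mdeg b.
Proof. by move=> ab; apply: leq_sum => i _. Qed.

Lemma mdiv_mdeg_eq a b : mdiv a b -> mdeg b <= mdeg a -> a = b.
Proof.
move=> ab deg_ba; apply/ffunP => i; apply/eqP; rewrite eqn_leq ab /= leqNgt.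
apply/negP => lt_ab; move: deg_ba; apply/negP; rewrite -ltnNge.
rewrite /mdeg (bigD1 i) //= [X in _ < X](bigD1 i) //= -addSn.
by rewrite leq_add // leq_sum.
Qed.

Lemma drl_lt_irr a : ~ drl_lt a a.
Proof. by case=> [|[_ [j []]]]; rewrite ltnn. Qed.

Lemma drl_lt_trans a b c : drl_lt a b -> drl_lt b c -> drl_lt a c.
Proof.
case=> [ab|[eab [i [lt_i eq_i]]]] [bc|[ebc [j [lt_j eq_j]]]].
- by left; apply: ltn_trans ab bc.
- by left; rewrite -ebc.
- by left; rewrite eab.
- right; split; first by rewrite eab.
  case: (ltngtP i j) => [lt_ij|lt_ji|/val_inj eq_ij].
  + exists j; split; first by rewrite -eq_i.
    by move=> k lt_jk; rewrite eq_j // eq_i // (ltn_trans lt_ij).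
  + exists i; split; first by rewrite eq_j.
    by move=> k lt_ik; rewrite eq_j ?eq_i // (ltn_trans lt_ji).
  + subst j; exists i; split; first exact: ltn_trans lt_j lt_i.
    by move=> k lt_ik; rewrite eq_j ?eq_i.
Qed.

Lemma drl_lt_le_trans a b c : drl_lt a b -> drl_le b c -> drl_lt a c.
Proof. by move=> ab [<- //|]; apply: drl_lt_trans. Qed.

Lemma mdiv_drl_lt a b : mdiv a b -> ~ drl_lt b a.
Proof.
move=> ab; case=> [|[deg_ba [j [lt_j _]]]].
  by rewrite ltnNge mdeg_mdiv.
by move: lt_j; rewrite (mdiv_mdeg_eq ab) ?deg_ba // ltnn.
Qed.

Lemma mingen_mdiv I b : I b -> exists a, mingen I a /\ mdiv a b.
Proof.
move=> Ib; pose P d := exists a, [/\ I a, mdiv a b & mdeg a = d].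
have P_deg_b : P (mdeg b) by exists b; split=> //; exact: mdiv_refl.
have [d [[a [Ia ab deg_a]] d_min]] := is_min_exists P_deg_b.
exists a; split=> //; split=> // c Ic ca.
apply: mdiv_mdeg_eq => //; rewrite deg_a; apply: d_min.
by exists c; split=> //; apply: mdiv_trans ca ab.
Qed.

Lemma gen_ideal_mingen I S b : (forall a, mingen I a -> S a) -> I b -> gen_ideal S b.
Proof. by move=> IS /mingen_mdiv [a [/IS Sa ab]]; exists a. Qed.

Definition antichain S := forall a b, S a -> S b -> mdiv a b -> a = b.

Lemma mingen_gen_ideal S b : antichain S -> mingen (gen_ideal S) b <-> S b.
Proof.
move=> antiS; split.
  move=> [[a [Sa ab]] b_min].
  by rewrite -(b_min a) //; exists a; split.
move=> Sb; split; first by exists b; split.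
move=> c [a [Sa ac]] cb; have ab := mdiv_trans ac cb.
by rewrite (antiS _ _ Sa Sb ab) in ac; apply: mdiv_anti.
Qed.

Lemma xpowE (i k : 'I_n) d : xpow i d k = if (k : nat) == i then d else 0.
Proof. by rewrite ffunE. Qed.

Lemma mdeg_xpow (i : 'I_n) d : mdeg (xpow i d) = d.
Proof.
rewrite /mdeg (bigD1 i) //= xpowE eqxx big1 ?addn0 // => j ne_ji.
by rewrite xpowE ifN.
Qed.

Lemma mdiv_xpow (i : 'I_n) d e : d <= e -> mdiv (xpow i d) (xpow i e).
Proof. by move=> le_de k; rewrite !xpowE; case: ifP. Qed.

Lemma drl_lt_xpow (i j : 'I_n) d : i < j -> 0 < d -> drl_lt (xpow j d) (xpow i d).
Proof.
move=> lt_ij d_gt0; right; split; first by rewrite !mdeg_xpow.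
exists j; split; first by rewrite !xpowE eqxx (gtn_eqF lt_ij).
by move=> k lt_jk; rewrite !xpowE (gtn_eqF lt_jk) (gtn_eqF (ltn_trans lt_ij lt_jk)).
Qed.
End Monomials.

Section LastVariable.
Variable n : nat.
Implicit Types a b : mon n.+1.

Lemma ord_max_or_widen (k : 'I_n.+1) :
  k = ord_max \/ exists k' : 'I_n, k = widen_ord (leqnSn n) k'.
Proof.
case: (ltnP k n) => [lt_kn|le_nk]; first by right; exists (Ordinal lt_kn); apply: val_inj.
by left; apply: val_inj; apply/eqP; rewrite eqn_leq le_nk -ltnS ltn_ord.
Qed.

Lemma drl_lt_ord_max_le a b : drl_lt b a -> mdeg b = mdeg a -> a ord_max <= b ord_max.
Proof.
move=> + deg_ba; case=> [|[_ [j [lt_j eq_j]]]]; first by rewrite deg_ba ltnn.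
move: lt_j eq_j; case: (ord_max_or_widen j) => [->|[j' ->]] => [/ltnW //|_ eq_j].
by rewrite eq_j //; exact: (ltn_ord j').
Qed.

Lemma ord_max_lt_drl_lt a b : mdeg b = mdeg a -> a ord_max < b ord_max -> drl_lt b a.
Proof.
move=> deg_ba lt_max; right; split=> //; exists ord_max; split=> // k.
by rewrite ltnNge -ltnS ltn_ord.
Qed.
End LastVariable.

Section ExtensionByLastVariable.
Variable m : nat.
Implicit Types (B C : mon m.+1) (M : mon m.+2).

Definition restr M : mon m.+1 := [ffun k => M (widen_ord (leqnSn m.+1) k)].

Lemma ext_mon_widen B h k : ext_mon B h (widen_ord (leqnSn m.+1) k) = B k.
Proof.
by rewrite ffunE /= ltn_ord mcoef_ord.
Qed.

Lemma ext_mon_ord_max B h : ext_mon B h ord_max = h.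
Proof. by rewrite ffunE /= ltnn. Qed.

Lemma ext_monK M : ext_mon (restr M) (M ord_max) = M.
Proof.
apply/ffunP => k; case: (ord_max_or_widen k) => [->|[k' ->]].
  by rewrite ext_mon_ord_max.
by rewrite ext_mon_widen ffunE.
Qed.

Lemma mdeg_ext_mon B h : mdeg (ext_mon B h) = mdeg B + h.
Proof.
rewrite /mdeg big_ord_recr /= ext_mon_ord_max; congr (_ + _).
by apply: eq_bigr => k _; rewrite ext_mon_widen.
Qed.

Lemma mdiv_ext_mon B C h c : mdiv (ext_mon B h) (ext_mon C c) <-> mdiv B C /\ h <= c.
Proof.
split=> [BC|[BC le_hc] k].
  split; last by have := BC ord_max; rewrite !ext_mon_ord_max.
  by move=> k; have := BC (widen_ord (leqnSn m.+1) k); rewrite !ext_mon_widen.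
by case: (ord_max_or_widen k) => [->|[k' ->]]; rewrite ?ext_mon_ord_max ?ext_mon_widen.
Qed.

Lemma drl_lt_ext_mon B C h c :
  drl_lt (ext_mon B h) (ext_mon C c) -> mdeg B + h = mdeg C + c -> drl_lt B C.
Proof.
rewrite -!mdeg_ext_mon => + deg_eq; case=> [|[_ [j [lt_j eq_j]]]].
  by rewrite deg_eq ltnn.
rewrite !mdeg_ext_mon in deg_eq.
case: (ord_max_or_widen j) => [eq_jmax|[j' eq_jj']]; subst j.
  by move: lt_j; rewrite !ext_mon_ord_max => lt_ch; left; lia.
have := eq_j ord_max (ltn_ord j'); rewrite !ext_mon_ord_max => eq_ch.
right; split; first by lia.
exists j'; split; first by move: lt_j; rewrite !ext_mon_widen.
by move=> k lt_jk; have := eq_j (widen_ord (leqnSn m.+1) k) lt_jk; rewrite !ext_mon_widen.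
Qed.

Lemma pmon_last B : pmon (mcoef B) m (B ord_max) = ext_mon B 0.
Proof.
apply/ffunP => k; case: (ord_max_or_widen k) => [->|[k' ->]].
  by rewrite ext_mon_ord_max ffunE /= ltnNge leqnSn /= gtn_eqF.
rewrite ext_mon_widen ffunE /=; case: ltnP => [_|le_mk]; first by rewrite mcoef_ord.
have -> : k' = ord_max by apply: val_inj; apply/eqP; rewrite eqn_leq le_mk -ltnS ltn_ord.
by rewrite /= eqxx.
Qed.

Lemma pmon_mdiv B (j : 'I_m.+1) u : u <= B j -> mdiv (pmon (mcoef B) j u) (ext_mon B 0).
Proof.
move=> le_u k; case: (ord_max_or_widen k) => [->|[k' ->]].
  by rewrite ext_mon_ord_max ffunE /= ltnNge (ltnW (ltn_ord j)) (gtn_eqF (ltn_ord j)).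
rewrite ext_mon_widen ffunE /= mcoef_ord; case: ifP => // _; case: ifP => // eq_kj.
by rewrite (_ : k' = j) //; apply: val_inj; apply/eqP.
Qed.
End ExtensionByLastVariable.

Section LastGeneratorPower.
Variables (m t : nat) (I : mon m.+2 -> Prop).
Hypothesis I_ideal : mono_ideal I.
Hypothesis I_arl : almost_revlex I.
Hypothesis t_gt0 : 0 < t.
Hypothesis I_last : last_gen I (xpow (inord m) t).

Let val_inord_m : (inord m : 'I_m.+2) = m :> nat.
Proof. exact: inordK. Qed.

Lemma mingen_ord_max a : mingen I a -> a ord_max = 0.
Proof.
have [[_ L_min] [deg_le deg_eq]] := I_last.
have L_max : xpow (inord m : 'I_m.+2) t ord_max = 0.
  by rewrite xpowE val_inord_m gtn_eqF.
move=> a_gen; apply/eqP; rewrite -leqn0 leqNgt; apply/negP => a_max.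
have := deg_le a a_gen; rewrite mdeg_xpow leq_eqVlt => /orP[/eqP deg_a|deg_a].
  case: (deg_eq a a_gen); first by rewrite mdeg_xpow.
    by move=> eq_La; move: a_max; rewrite -eq_La L_max.
  move/drl_lt_ord_max_le; rewrite mdeg_xpow L_max leqn0 => /(_ (esym deg_a))/eqP a0.
  by move: a_max; rewrite a0.
have I_xa : I (xpow (inord m : 'I_m.+2) (mdeg a)).
  apply: (I_arl a_gen); first by rewrite mdeg_xpow.
  by apply: ord_max_lt_drl_lt; rewrite ?mdeg_xpow // xpowE val_inord_m gtn_eqF.
have := congr1 mdeg (L_min _ I_xa (mdiv_xpow _ (ltnW deg_a))).
by rewrite !mdeg_xpow => eq_at; move: deg_a; rewrite eq_at ltnn.
Qed.

Lemma xpow_mem (j : 'I_m.+2) : j < m.+1 -> I (xpow j t).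
Proof.
have [L_gen _] := I_last.
rewrite ltnS leq_eqVlt => /orP[/eqP eq_jm|lt_jm].
  by rewrite (_ : j = inord m); [exact: L_gen.1 | apply: val_inj; rewrite /= val_inord_m].
apply: (I_arl L_gen); first by rewrite !mdeg_xpow.
by apply: drl_lt_xpow; rewrite ?val_inord_m.
Qed.

Lemma inT_iff B : inT I B <-> ~ I (ext_mon B 0).
Proof.
split=> [B_T I_B|notI_B j].
  have [v [[_ v_min] lt_Bv]] := B_T ord_max.
  have := v_min (B ord_max); rewrite /= pmon_last => /(_ I_B) le_vB.
  by move: (leq_ltn_trans le_vB lt_Bv); rewrite ltnn.
have I_pt : I (pmon (mcoef B) j t).
  apply: (I_ideal (@xpow_mem (widen_ord (leqnSn m.+1) j) (ltn_ord j))) => k.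
  by rewrite xpowE ffunE /=; case: ifP => // /eqP ->; rewrite ltnn.
have [v v_min] := @is_min_exists (fun u => I (pmon (mcoef B) j u)) _ I_pt.
exists v; split=> //; rewrite ltnNge; apply/negP => le_vB.
exact/notI_B/(I_ideal v_min.1)/pmon_mdiv.
Qed.

Variables (s : nat) (A : 'I_s -> mon m.+1) (g : 'I_s -> nat).
Hypothesis A_T : forall i, inT I (A i).
Hypothesis A_decr : forall i j : 'I_s, i < j -> drl_lt (A j) (A i).
Hypothesis A_top : forall B, inT I B -> (forall i, B <> A i) ->
  forall i : 'I_s, val i = s.-1 -> drl_lt B (A i).
Hypothesis g_gt0 : forall i, 0 < g i.
Hypothesis deg_g_mono : forall i j : 'I_s, drl_lt (A j) (A i) ->
  mdeg (A i) + g i <= mdeg (A j) + g j.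

Definition ext_gens M := mingen I M \/ exists i, M = ext_mon (A i) (g i).

Lemma A_drl_le (i j : 'I_s) : i <= j -> drl_le (A j) (A i).
Proof.
rewrite leq_eqVlt => /orP[/eqP/val_inj ->|/A_decr]; [exact: or_introl | exact: or_intror].
Qed.

Lemma ext_gens_antichain : antichain ext_gens.
Proof.
move=> a b [a_gen|[j ->]] [b_gen|[i ->]] ab.
- exact: b_gen.2 _ a_gen.1 ab.
- exfalso; apply: (inT_iff (A i)).1 (A_T i) _; apply: (I_ideal a_gen.1).
  move: ab; rewrite -(ext_monK a) (mingen_ord_max a_gen).
  by move/mdiv_ext_mon => [restr_a _]; apply/mdiv_ext_mon.
- have := ab ord_max; rewrite ext_mon_ord_max (mingen_ord_max b_gen) leqn0 => /eqP gj0.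
  by move: (g_gt0 j); rewrite gj0.
- move/mdiv_ext_mon: ab => [AjAi le_g].
  case: (ltngtP i j) => [lt_ij|lt_ji|/val_inj -> //].
  + have le_deg : mdeg (A i) <= mdeg (A j) by have := deg_g_mono (A_decr lt_ij); lia.
    by move: (A_decr lt_ij); rewrite (mdiv_mdeg_eq AjAi le_deg) => /drl_lt_irr.
  + by case: (mdiv_drl_lt AjAi (A_decr lt_ji)).
Qed.

Lemma A_initial_segment B i : inT I B -> drl_lt (A i) B -> exists2 k, B = A k & k < i.
Proof.
move=> B_T lt_AiB; case: (classic (exists k, B = A k)) => [[k eq_Bk]|not_A].
  case: (ltnP k i) => [lt_ki|le_ik]; first by exists k.
  by case: (@drl_lt_irr _ (A i)); apply: drl_lt_le_trans (A_drl_le le_ik); rewrite -eq_Bk.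
have lt_last : s.-1 < s by rewrite ltn_predL (leq_ltn_trans (leq0n i) (ltn_ord i)).
have lt_B_last : drl_lt B (A (Ordinal lt_last)).
  by apply: A_top => // k eq_Bk; apply: not_A; exists k.
case: (@drl_lt_irr _ (A i)).
apply: drl_lt_le_trans (drl_lt_trans lt_AiB lt_B_last) (A_drl_le _).
by rewrite /= -ltnS (ltn_predK (ltn_ord i)) ltn_ord.
Qed.

Lemma gen_ideal_ext_gens_of_mem M : I M -> gen_ideal ext_gens M.
Proof. exact: gen_ideal_mingen (fun a a_gen => or_introl a_gen). Qed.

Lemma almost_revlex_at_ext_mon M i :
  mdeg M = mdeg (ext_mon (A i) (g i)) -> drl_lt (ext_mon (A i) (g i)) M ->
  gen_ideal ext_gens M.
Proof.
rewrite -(ext_monK M); move: (restr M) (M ord_max) => B c.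
rewrite !mdeg_ext_mon => deg_eq lt_M; have lt_AiB := drl_lt_ext_mon lt_M (esym deg_eq).
case: (classic (I (ext_mon B 0))) => [I_B|/(inT_iff B).2 B_T].
  apply/gen_ideal_ext_gens_of_mem/(I_ideal I_B)/mdiv_ext_mon.
  exact: conj (mdiv_refl B) (leq0n c).
have [k eq_B lt_ki] := A_initial_segment B_T lt_AiB; subst B.
exists (ext_mon (A k) (g k)); split; first by right; exists k.
apply/mdiv_ext_mon; split; first exact: mdiv_refl.
by have := deg_g_mono (A_decr lt_ki); lia.
Qed.

Lemma almost_revlex_ext_gens : almost_revlex (gen_ideal ext_gens).
Proof.
move=> M N /(mingen_gen_ideal _ ext_gens_antichain) [N_gen|[i ->]] deg_MN lt_NM.
  exact: gen_ideal_ext_gens_of_mem (I_arl N_gen deg_MN lt_NM).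
exact: almost_revlex_at_ext_mon deg_MN lt_NM.
Qed.
End LastGeneratorPower.

Theorem lemma3p7 (m : nat) (I : mon m.+2 -> Prop) (t : nat)
  (s : nat) (A : 'I_s -> mon m.+1) (g : 'I_s -> nat) :
  mono_ideal I ->
  almost_revlex I ->
  0 < t ->
  last_gen I (xpow (inord m : 'I_m.+2) t) ->
  0 < s ->
  (forall i, inT I (A i)) ->
  (forall i j : 'I_s, (i < j)%N -> drl_lt (A j) (A i)) ->
  (forall B, inT I B -> (forall i, B <> A i) ->
     forall i : 'I_s, val i = s.-1 -> drl_lt B (A i)) ->
  (forall i, 0 < g i) ->
  (forall i j : 'I_s, drl_lt (A j) (A i) ->
     t <= mdeg (A i) + g i <= mdeg (A j) + g j) ->
  let S := fun M => mingen I M \/ exists i, M = ext_mon (A i) (g i) in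
  let J := gen_ideal S in
  almost_revlex J /\ (forall M, mingen J M <-> S M).
Proof.
move=> I_ideal I_arl t_gt0 I_last _ A_T A_decr A_top g_gt0 deg_g S J.
have deg_g_mono i j (lt_ji : drl_lt (A j) (A i)) : mdeg (A i) + g i <= mdeg (A j) + g j.
  by case/andP: (deg_g i j lt_ji).
split.
  exact: (almost_revlex_ext_gens I_ideal I_arl t_gt0 I_last A_T A_decr A_top g_gt0 deg_g_mono).
move=> M; apply: mingen_gen_ideal.
exact: (ext_gens_antichain I_ideal I_arl t_gt0 I_last A_T A_decr g_gt0 deg_g_mono).
Qed.
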